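(* Let $k$ be a difference field of characteristic $0$ and $R=k\{y_1,\ldots,y_n\}$. If $I$ is a monomial $\sigma$-ideal of $R$, then its radical well-mixed closure $\langle I\rangle_r$ is also a monomial $\sigma$-ideal.
   Context: A difference field is a field $k$ with a ring endomorphism $\sigma$; $R=k\{y_1,\ldots,y_n\}$ is the polynomial ring over $k$ in the variables $\sigma^j(y_i)$, with $\sigma$ extended naturally. For $p=\sum_ic_ix^i\in\mathbb{N}[x]$ and $a\in R$, $a^p=\prod_i(\sigma^i(a))^{c_i}$; monomials are $\mathbf{y}^{\mathbf{u}}=y_1^{u_1}\cdots y_n^{u_n}$ with $\mathbf{u}\in\mathbb{N}[x]^n$. A $\sigma$-ideal is an ideal stable under $\sigma$; monomial if generated by monomials; well-mixed if $ab\in I\Rightarrow a\sigma(b)\in I$. $\langle I\rangle_r$ is the smallest radical well-mixed $\sigma$-ideal containing $I$. *)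

From HB Require Import structures.
From mathcomp Require Import all_boot all_order all_algebra.
From mathcomp Require Import finmap.
From mathcomp.multinomials Require Import monalg.
Set Implicit Arguments. Unset Strict Implicit. Unset Printing Implicit Defensive.
Import GRing.Theory.
Local Open Scope ring_scope.

(* Index set of the difference variables: (i, j) stands for sigma^j(y_i),
   with i : 'I_n (the n difference indeterminates y_1..y_n) and j : nat. *)
Definition dvar (n : nat) := ('I_n * nat)%type.

Definition dmonom (n : nat) := {cmonom (dvar n)}.

(* The difference polynomial ring R = k{y_1,...,y_n}: the polynomial ring
   over k in the (infinitely many) variables sigma^j(y_i). *)
Definition dpoly (k : fieldType) (n : nat) := {malg k[dmonom n]}.

(* Shift of a monomial: sigma^j(y_i) |-> sigma^(j+1)(y_i). *)
Definition shiftcm (n : nat) (m : dmonom n) : dmonom n :=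
  \big[@mulcm _/@onecm _]_(x <- finsupp m) expcmn (ucm (x.1, x.2.+1)) (m x).

Definition sigmaR (k : fieldType) (sigma : {rmorphism k -> k}) (n : nat)
  (p : dpoly k n) : dpoly k n :=
  \sum_(m <- msupp p) << sigma (p@_m) *g shiftcm m >>.

Definition is_monomial (k : fieldType) (n : nat) (p : dpoly k n) : Prop :=
  exists u : dmonom n, p = << u >>.

Definition is_ideal (R : comRingType) (I : R -> Prop) : Prop :=
  [/\ I 0, (forall x y, I x -> I y -> I (x + y)) & (forall r x, I x -> I (r * x))].

Definition ideal_gen (R : comRingType) (S : R -> Prop) (x : R) : Prop :=
  exists rs : seq (R * R),
    (forall p, p \in rs -> S p.2) /\ x = \sum_(p <- rs) p.1 * p.2.

Definition is_sigma_ideal (R : comRingType) (s : R -> R) (I : R -> Prop) :=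
  is_ideal I /\ (forall x, I x -> I (s x)).

Definition well_mixed (R : comRingType) (s : R -> R) (I : R -> Prop) :=
  forall a b, I (a * b) -> I (a * s b).

Definition radical (R : comRingType) (I : R -> Prop) :=
  forall a (e : nat), I (a ^+ e) -> I a.

(* Monomial ideal: generated by monomials (equivalently, by the monomials
   it contains). *)
Definition monomial_ideal (k : fieldType) (n : nat) (I : dpoly k n -> Prop) :=
  forall x, I x <-> ideal_gen (fun m => I m /\ is_monomial m) x.

Definition rwm_closure (R : comRingType) (s : R -> R) (I : R -> Prop) (x : R) :=
  forall J : R -> Prop, is_sigma_ideal s J -> well_mixed s J -> radical J ->
    (forall y, I y -> J y) -> J x.

(* Let J be the ideal generated by the monomials of <I>_r.  Since I is
   monomial, I <= J <= <I>_r, so it suffices to show that J is a radical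
   well-mixed sigma-ideal.  A polynomial lies in J iff all the monomials of
   its support lie in <I>_r.  The key tool is, for a monomial y^z not in
   <I>_r, the ring morphism onto k[y_x | x in supp z] killing the variables
   outside supp z: by radicality every monomial of <I>_r supported in
   supp z would give y^z in <I>_r, so this morphism kills J.  As its target
   is a domain and it preserves the coefficient of y^z for every monomial
   supported in supp z, a^e in J forces all monomials of a into <I>_r, and
   ab in J forces y^u y^v in <I>_r for all monomials y^u of a and y^v of b;
   well-mixedness of <I>_r then gives a sigma(b) in J. *)
From HB Require Import structures.
From mathcomp Require Import all_boot all_order all_algebra.
From mathcomp Require Import finmap.
From mathcomp.multinomials Require Import monalg.
From mathcomp.multinomials Require mpoly.
From Stdlib Require Import Classical.
Set Implicit Arguments. Unset Strict Implicit. Unset Printing Implicit Defensive.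
Import GRing.Theory.
Local Open Scope ring_scope.
Local Open Scope fset_scope.
(* Some [core] hints of the algebra library make [trivial], hence ssreflect's
   [done], diverge on equations in [dpoly k n]; closing such goals by
   conversion first keeps that search from being triggered. *)
Ltac done := solve [ reflexivity | Corelib.ssr.ssreflect.done ].

Section IdealGen.
Variable R : comRingType.

Lemma ideal_sum (J : R -> Prop) (T : eqType) (r : seq T) (F : T -> R) :
  is_ideal J -> (forall t, t \in r -> J (F t)) -> J (\sum_(t <- r) F t).
Proof. by move=> [J0 JD _] JF; rewrite big_seq; apply: big_ind. Qed.

Lemma is_ideal_gen (S : R -> Prop) : is_ideal (ideal_gen S).
Proof.
split.
- by exists [::]; split => //; rewrite big_nil.
- move=> _ _ [rx [Sx ->]] [ry [Sy ->]]; exists (rx ++ ry); split.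
    by move=> p; rewrite mem_cat => /orP [/Sx|/Sy].
  by rewrite big_cat.
- move=> r _ [rx [Sx ->]]; exists [seq (r * p.1, p.2) | p <- rx]; split.
    by move=> p /mapP [q /Sx Sq ->].
  by rewrite big_map mulr_sumr; apply: eq_bigr => p _; rewrite mulrA.
Qed.

Lemma ideal_gen_min (S J : R -> Prop) :
  is_ideal J -> (forall m, S m -> J m) -> forall x, ideal_gen S x -> J x.
Proof.
move=> idJ SJ _ [rx [Sx ->]]; apply: ideal_sum => // p /Sx /SJ.
by case: idJ => _ _; apply.
Qed.

Lemma ideal_gen_base (S : R -> Prop) m : S m -> ideal_gen S m.
Proof.
move=> Sm; exists [:: (1, m)]; split; last by rewrite big_seq1 mul1r.
by move=> p; rewrite inE => /eqP ->.
Qed.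

Lemma is_ideal_kernel (S : comRingType) (f : {rmorphism R -> S}) :
  is_ideal (fun x => f x = 0).
Proof.
split=> [|x y x0 y0|r x x0]; first exact: rmorph0.
  by rewrite rmorphD x0 y0 addr0.
by rewrite rmorphM x0 mulr0.
Qed.

End IdealGen.

Section RwmClosure.
Variables (R : comRingType) (s : R -> R) (I : R -> Prop).
Local Notation C := (rwm_closure s I).

Lemma rwm_closure_ideal : is_ideal C.
Proof.
split.
- by move=> J [[J0 _ _] _].
- move=> x y Cx Cy J idJ wmJ radJ IJ; have [[_ JD _] _] := idJ.
  exact: JD (Cx J idJ wmJ radJ IJ) (Cy J idJ wmJ radJ IJ).
- move=> r x Cx J idJ wmJ radJ IJ; have [[_ _ JM] _] := idJ.
  exact: JM (Cx J idJ wmJ radJ IJ).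
Qed.

Lemma rwm_closure_sigma x : C x -> C (s x).
Proof. move=> Cx J idJ wmJ radJ IJ; exact: idJ.2 _ (Cx J idJ wmJ radJ IJ). Qed.

Lemma rwm_closure_well_mixed : well_mixed s C.
Proof. move=> a b Cab J idJ wmJ radJ IJ; exact: wmJ a b (Cab J idJ wmJ radJ IJ). Qed.

Lemma rwm_closure_radical : radical C.
Proof. move=> a e Cae J idJ wmJ radJ IJ; exact: radJ a e (Cae J idJ wmJ radJ IJ). Qed.

Lemma rwm_closure_sub y : I y -> C y.
Proof. by move=> Iy J _ _ _; apply. Qed.

End RwmClosure.

Section Monomials.
Variables (k : fieldType) (n : nat).
Implicit Types (u v w : dmonom n) (x : dpoly k n).

Lemma expcmnE u N i : expcmn u N i = (N * u i)%N.
Proof.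
case: N => [|N]; first by rewrite onecmE.
rewrite /expcmn iteropS; elim: N => [|N IH]; first by rewrite mul1n.
rewrite iterS mulcmE IH [in RHS]mulSn; reflexivity.
Qed.

Lemma finsupp_mulcm u v : finsupp (mulcm u v) = finsupp u `|` finsupp v.
Proof. exact: mdomD. Qed.

Lemma monomialM u v : (<< u >> : dpoly k n) * << v >> = << mulcm u v >>.
Proof. rewrite malgM_def fgmulUU mulr1; reflexivity. Qed.

Lemma monomialX u (N : nat) : (<< u >> : dpoly k n) ^+ N = << expcmn u N >>.
Proof.
case: N => [|N]; first by rewrite expr0; reflexivity.
rewrite /expcmn iteropS; elim: N => [|N IH]; first by rewrite expr1.
by rewrite exprS IH monomialM iterS.
Qed.

Lemma monomialZ (c : k) u : (<< c *g u >> : dpoly k n) = c%:MP * << u >>.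
Proof.
rewrite mul_malgC; apply/malgP => w.
by rewrite mcoeffZ [in LHS]mcoeffU [in RHS]mcoeffU mulr_natr.
Qed.

Lemma monalg_monomialE x : x = \sum_(u <- msupp x) (x@_u)%:MP * << u >>.
Proof. by rewrite {1}(monalgE x); apply: eq_bigr => u _; rewrite monomialZ. Qed.

Lemma msupp_sum (T : Type) (r : seq T) (F : T -> dpoly k n) u :
  u \in msupp (\sum_(t <- r) F t) -> exists t, u \in msupp (F t).
Proof.
elim: r => [|t r IH]; first by rewrite big_nil msupp0 in_fset0.
rewrite big_cons => /(fsubsetP (msuppD_le _ _)); rewrite in_fsetU => /orP [|/IH //].
by exists t.
Qed.

Lemma cmonom_le_mdeg u i : (u i <= mdeg u)%N.
Proof.
case: (mdomP u i) => // iu.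
by rewrite mdegE (bigD1_seq i) ?fset_uniq //= leq_addr.
Qed.

End Monomials.

Definition monomial_part (k : fieldType) (n : nat) (C : dpoly k n -> Prop) :=
  ideal_gen (fun m => C m /\ is_monomial m).

Section MonomialPart.
Variables (k : fieldType) (n : nat) (C : dpoly k n -> Prop).
Hypothesis idC : is_ideal C.
Implicit Types (u v w : dmonom n) (x : dpoly k n).

Lemma ideal_monomialM u v : C << v >> -> C << mulcm u v >>.
Proof. by rewrite -monomialM; case: idC => _ _; apply. Qed.

Lemma monomial_partP x :
  monomial_part C x <-> forall u, u \in msupp x -> C << u >>.
Proof.
split.
- move: x; apply: ideal_gen_min => [|m [Cm [w em]] u].
    split=> [u|x y Cx Cy u|r x Cx _ /msuppM_le [u [v [_ /Cx Cv ->]]]].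
    + by rewrite msupp0 in_fset0.
    + by move/(fsubsetP (msuppD_le _ _)); rewrite in_fsetU => /orP [/Cx|/Cy].
    + exact: ideal_monomialM.
  by rewrite em msuppU1 in_fset1 => /eqP ->; rewrite -em.
- move=> Cx; rewrite (monalg_monomialE x); apply: ideal_sum => [|u /Cx Cu].
    exact: is_ideal_gen.
  have [_ _ gen_mul] := is_ideal_gen (fun m => C m /\ is_monomial m).
  by apply/gen_mul/ideal_gen_base; split; last exists u.
Qed.

Hypothesis radC : radical C.

Lemma radical_monomial_supp u w :
  C << w >> -> finsupp w `<=` finsupp u -> C << u >>.
Proof.
move=> Cw /fsubsetP wu; apply: (radC (e := mdeg w)); rewrite monomialX.
suff -> : expcmn u (mdeg w) = mulcm (divcm (expcmn u (mdeg w)) w) w.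
  exact: ideal_monomialM.
apply/eqP/cmP => i; rewrite mulcmE divcmE expcmnE subnK //.
case: (mdomP w i) => [iw|_]; last exact: leq0n.
have u_gt0 : (0 < u i)%N by rewrite lt0n cmE_neq0 wu.
by rewrite (leq_trans (cmonom_le_mdeg w i)) // leq_pmulr.
Qed.

End MonomialPart.

Section Sigma.
Variables (k : fieldType) (sigma : {rmorphism k -> k}) (n : nat).
Local Notation s := (sigmaR sigma (n:=n)).

Lemma sigmaR_monomial (v : dmonom n) : s << v >> = << shiftcm v >>.
Proof. by rewrite /sigmaR msuppU1 big_seq_fset1 mcoeffUU rmorph1. Qed.

Lemma msupp_sigmaR (x : dpoly k n) w :
  w \in msupp (s x) -> exists2 v, v \in msupp x & w = shiftcm v.
Proof.
rewrite /sigmaR => /msupp_sum [v]; case: (boolP (v \in msupp x)) => [vx|]; last first.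
  by rewrite -mcoeff_eq0 => /eqP ->; rewrite rmorph0 monalgU0 msupp0 in_fset0.
by move=> /(fsubsetP msuppU_le); rewrite in_fset1 => /eqP ->; exists v.
Qed.

Lemma monomial_part_sigma (C : dpoly k n -> Prop) x :
  is_ideal C -> (forall y, C y -> C (s y)) ->
  monomial_part C x -> monomial_part C (s x).
Proof.
move=> idC sC /(monomial_partP idC) Cx; apply/(monomial_partP idC) => w.
by move=> /msupp_sigmaR [v vx ->]; rewrite -sigmaR_monomial; apply/sC/Cx.
Qed.

End Sigma.

(* Imported only here: its notations ([@_], [%:MP], ['X_{1..n}], ...) shadow
   those of monalg used above. *)
Import mpoly.

Section Restriction.
Variables (k : fieldType) (n : nat) (z : dmonom n).
Implicit Types (u w : dmonom n).
Local Notation m := (size (finsupp z)).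
Local Notation var i := (tnth (in_tuple (finsupp z)) i).

Definition restrict_monom w : multinom m := [multinom w (var i) | i < m].

Definition restrict_monomial w : mpoly m k :=
  if finsupp w `<=` finsupp z then 'X_[restrict_monom w] else 0.

Lemma restrict_monomE w i : restrict_monom w i = w (var i).
Proof. exact: mnmE. Qed.

Lemma restrict_monom_inj u w : finsupp u `<=` finsupp z -> finsupp w `<=` finsupp z ->
  restrict_monom u = restrict_monom w -> u = w.
Proof.
move=> /fsubsetP uz /fsubsetP wz uw; apply/eqP/cmP => x.
case: (boolP (x \in finsupp z)) => [xz|xNz]; last first.
  have /negPf ux : x \notin finsupp u by apply: contra xNz; apply: uz.
  have /negPf wx : x \notin finsupp w by apply: contra xNz; apply: wz.
  by move: ux wx; rewrite -!cmE_neq0 => /negbFE/eqP -> /negbFE/eqP ->.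
have ix : (index x (finsupp z) < m)%N by rewrite index_mem.
have := congr1 (fun t : multinom m => t (Ordinal ix)) uw.
by rewrite /= !restrict_monomE (tnth_nth x) /= nth_index.
Qed.

Lemma restrict_monomial_mmorphism : mmorphism restrict_monomial.
Proof.
split=> [u v|]; rewrite /restrict_monomial.
  rewrite mdomD fsubUset.
  case: (finsupp u `<=` finsupp z); case: (finsupp v `<=` finsupp z);
    rewrite ?mulr0 ?mul0r //= -mpolyXD; congr mpolyX.
  by apply/mnmP => i; rewrite mnmDE !restrict_monomE cmM.
rewrite mdom1 fsub0set -(mpolyX0 _ k); congr mpolyX.
by apply/mnmP => i; rewrite mnm0E restrict_monomE cm1.
Qed.

HB.instance Definition _ :=
  isMultiplicative.Build (dmonom n) (mpoly m k) restrict_monomial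
    restrict_monomial_mmorphism.

End Restriction.

Definition restrict (k : fieldType) (n : nat) (z : dmonom n) :
    {rmorphism dpoly k n -> (mpoly (size (finsupp z)) k)} :=
  monalg.mmap (mpolyC _ (R := k)) (restrict_monomial k z).

Section RestrictionTheory.
Variables (k : fieldType) (n : nat) (z : dmonom n).
Implicit Types (u w : dmonom n) (x : dpoly k n).

Lemma restrict_monomialU w : restrict k z << w >> = restrict_monomial k z w.
Proof. by rewrite /restrict /= monalg.mmapU /= mpolyC1 mul1r. Qed.

Lemma mcoeff_restrict_monomial u w : finsupp u `<=` finsupp z ->
  mcoeff (restrict_monom z u) (restrict_monomial k z w) = (w == u)%:R.
Proof.
rewrite /restrict_monomial => uz; case: ifP => [wz|wNz]; last first.
  by rewrite mcoeff0; case: eqP => // wu; rewrite wu uz in wNz.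
rewrite mcoeffX; case: (eqVneq w u) => [-> | wu]; first by rewrite eqxx.
by rewrite (negPf (contra_neq (restrict_monom_inj wz uz) wu)).
Qed.

Lemma mcoeff_restrict u x : finsupp u `<=` finsupp z ->
  mcoeff (restrict_monom z u) (restrict k z x) = monalg.mcoeff u x.
Proof.
move=> uz; rewrite /restrict /= monalg.mmapE raddf_sum /=.
under eq_bigr do rewrite mcoeffCM mcoeff_restrict_monomial //.
case: (boolP (u \in monalg.msupp x)) => [ux|uNx].
  rewrite (bigD1_seq u) ?fset_uniq //= eqxx mulr1 big1 ?addr0 // => w /negPf ->.
  by rewrite mulr0.
rewrite (monalg.mcoeff_outdom uNx) big1_seq // => w /andP [_ wx].
have /negPf -> : w != u by apply: contraNneq uNx => <-.
by rewrite mulr0.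
Qed.

End RestrictionTheory.

Section MonomialPartRadical.
Variables (k : fieldType) (n : nat) (C : dpoly k n -> Prop).
Hypotheses (idC : is_ideal C) (radC : radical C).
Implicit Types (u v w z : dmonom n) (x : dpoly k n).

Lemma restrict_monomial_part z x :
  ~ C << z >> -> monomial_part C x -> restrict k z x = 0.
Proof.
move=> Cz; apply: (ideal_gen_min (is_ideal_kernel (restrict k z))).
move=> m [Cm [w em]]; rewrite em restrict_monomialU /restrict_monomial.
case: ifP => // wz; rewrite em in Cm.
by case: (Cz (radical_monomial_supp idC radC Cm wz)).
Qed.

Lemma msupp_restrict_eq0 z u x :
  restrict k z x = 0 -> finsupp u `<=` finsupp z -> u \notin monalg.msupp x.
Proof. by move=> x0 uz; rewrite -monalg.mcoeff_eq0 -(mcoeff_restrict x uz) x0 mcoeff0. Qed.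

Lemma monomial_part_radical : radical (monomial_part C).
Proof.
move=> a e ae; apply/(monomial_partP idC) => u ua; apply: NNPP => Cu.
have /eqP := restrict_monomial_part Cu ae; rewrite rmorphXn expf_eq0 => /andP [_ /eqP a0].
by have := msupp_restrict_eq0 a0 (fsubset_refl _); rewrite ua.
Qed.

Lemma monomial_part_mul_msupp a b u v :
  monomial_part C (a * b) -> u \in monalg.msupp a -> v \in monalg.msupp b ->
  C << mulcm u v >>.
Proof.
move=> ab ua vb; apply: NNPP => Cuv.
have /eqP := restrict_monomial_part Cuv ab; rewrite rmorphM mulf_eq0.
case/orP => /eqP r0.
- have uz : finsupp u `<=` finsupp (mulcm u v) by rewrite finsupp_mulcm fsubsetUl.
  by rewrite (negPf (msupp_restrict_eq0 r0 uz)) in ua.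
- have vz : finsupp v `<=` finsupp (mulcm u v) by rewrite finsupp_mulcm fsubsetUr.
  by rewrite (negPf (msupp_restrict_eq0 r0 vz)) in vb.
Qed.

End MonomialPartRadical.

Lemma monomial_part_well_mixed (k : fieldType) (sigma : {rmorphism k -> k}) (n : nat)
    (C : dpoly k n -> Prop) :
  is_ideal C -> radical C -> well_mixed (sigmaR sigma (n:=n)) C ->
  well_mixed (sigmaR sigma (n:=n)) (monomial_part C).
Proof.
move=> idC radC wmC a b ab; apply/(monomial_partP idC) => t.
case/monalg.msuppM_le => [u [_ [ua /msupp_sigmaR [v vb ->] ->]]].
have Cuv : C (<< u >> * << v >>).
  rewrite monomialM; exact (monomial_part_mul_msupp idC radC ab ua vb).
have Cus : C (<< u >> * << shiftcm v >>) by rewrite -(sigmaR_monomial sigma); apply: wmC.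
rewrite monomialM in Cus; exact Cus.
Qed.

Theorem corollary5p5 (k : fieldType) (sigma : {rmorphism k -> k})
  (hchar : [pchar k] =i pred0) (n : nat) (I : dpoly k n -> Prop) :
  is_sigma_ideal (sigmaR sigma (n:=n)) I -> monomial_ideal I ->
  is_sigma_ideal (sigmaR sigma (n:=n)) (rwm_closure (sigmaR sigma (n:=n)) I) /\
  monomial_ideal (rwm_closure (sigmaR sigma (n:=n)) I).
Proof.
move=> _ monoI; set s := sigmaR sigma (n:=n); set C := rwm_closure s I.
have idC : is_ideal C := rwm_closure_ideal s I.
have sC : forall x, C x -> C (s x) := @rwm_closure_sigma _ s I.
have radC : radical C := @rwm_closure_radical _ s I.
have wmC : well_mixed s C := @rwm_closure_well_mixed _ s I.
split; first by split.
move=> x; split; last by apply: ideal_gen_min => // m [].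
move=> Cx; apply: (Cx (monomial_part C)).
- by split; [exact: is_ideal_gen | move=> y; exact: monomial_part_sigma].
- exact (monomial_part_well_mixed idC radC wmC).
- exact: monomial_part_radical.
- move=> y /monoI; apply: ideal_gen_min; first exact: is_ideal_gen.
  by move=> m [Im mono_m]; apply: ideal_gen_base; split; first exact: rwm_closure_sub.
Qed.
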